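(* Let $E$ be a congruence on $\overline{\boldsymbol{T}(X_1,\ldots,X_n)}$, $F$ a congruence on $\overline{\boldsymbol{T}(Y_1,\ldots,Y_m)}$, $V:=\boldsymbol{V}(E)$, $W:=\boldsymbol{V}(F)$, and let $\psi:\overline{\boldsymbol{T}(X_1,\ldots,X_n)}/E\to\overline{\boldsymbol{T}(Y_1,\ldots,Y_m)}/F$ be a $\boldsymbol{T}$-algebra homomorphism. If $\psi$ is injective and $F=\boldsymbol{E}(W)$, then $E=\boldsymbol{E}(V)$. In particular, when $\overline{\boldsymbol{T}(X_1,\ldots,X_n)}/E$ is isomorphic to $\overline{\boldsymbol{T}(Y_1,\ldots,Y_m)}/F$ as a $\boldsymbol{T}$-algebra, $E=\boldsymbol{E}(\boldsymbol{V}(E))$ if and only if $F=\boldsymbol{E}(\boldsymbol{V}(F))$.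
   Context: $\boldsymbol{T}=\mathbb{R}\cup\{-\infty\}$ with $a\oplus b=\max\{a,b\}$, $a\odot b=a+b$. $\overline{\boldsymbol{T}[X_1,\ldots,X_n]}$ is the tropical polynomial semiring modulo identifying polynomials defining the same function $\boldsymbol{T}^n\to\boldsymbol{T}$; it is cancellative and $\overline{\boldsymbol{T}(X_1,\ldots,X_n)}$ is its semifield of fractions. Each element defines a function $\mathbb{R}^n\to\boldsymbol{T}$ (quotients evaluated as differences). $\boldsymbol{T}$-algebras are semirings with a semiring homomorphism from $\boldsymbol{T}$; homomorphisms are compatible semiring homomorphisms. A congruence is an equivalence relation compatible with both operations. $\boldsymbol{V}(E)=\{x\in\mathbb{R}^n\mid f(x)=g(x)\ \forall(f,g)\in E\}$; for $V\subset\mathbb{R}^n$, $\boldsymbol{E}(V)=\{(f,g)\mid f(x)=g(x)\ \forall x\in V\}$. Elements of $\overline{\boldsymbol{T}(Y_1,\ldots,Y_m)}/F$ are evaluated at points of $\boldsymbol{V}(F)$ via representatives. *)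

From Stdlib Require Import Reals.
From mathcomp Require Import all_boot.

Set Implicit Arguments.
Unset Strict Implicit.
Unset Printing Implicit Defensive.

(** The tropical semifield T = R ∪ {-oo}: [None] is -oo. *)
Definition T := option R.

Definition tmax (a b : T) : T :=
  match a, b with
  | None, _ => b
  | _, None => a
  | Some x, Some y => Some (Rmax x y)
  end.

Definition tplus (a b : T) : T :=
  match a, b with
  | Some x, Some y => Some (Rplus x y)
  | _, _ => None
  end.

(** quotient a / b evaluated as a difference (b is always finite below) *)
Definition tdiv (a b : T) : T :=
  match a, b with
  | Some x, Some y => Some (Rminus x y)
  | _, _ => None
  end.

Definition pt (n : nat) := 'I_n -> R.
Definition fn (n : nat) := pt n -> T.

(** A tropical polynomial in n variables: a finite list of monomials
    c ⊙ X^a with c real and a ∈ N^n (monomials with coefficient -oo are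
    omitted; the empty list is the polynomial -oo). *)
Definition tpoly (n : nat) := list (R * ('I_n -> nat)).

Definition lin (n : nat) (a : 'I_n -> nat) (x : pt n) : R :=
  \big[Rplus/R0]_(i < n) (Rmult (INR (a i)) (x i)).

Definition peval (n : nat) (p : tpoly n) (x : pt n) : T :=
  List.fold_right (fun t acc => tmax (Some (Rplus (fst t) (lin (snd t) x))) acc) None p.

(** Elements of the semifield  \overline{T(X_1,...,X_n)}, represented by the
    function R^n -> T they define: quotients f/g of tropical polynomials with
    g nonzero (two such fractions are equal in the semifield iff they define
    the same function on R^n). *)
Definition is_trat (n : nat) (h : fn n) : Prop :=
  exists (f g : tpoly n), g <> nil /\ forall x, h x = tdiv (peval f x) (peval g x).

Definition tadd (n : nat) (h1 h2 : fn n) : fn n := fun x => tmax (h1 x) (h2 x).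
Definition tmul (n : nat) (h1 h2 : fn n) : fn n := fun x => tplus (h1 x) (h2 x).
Definition tconst (n : nat) (c : T) : fn n := fun _ => c.

Record congruence (n : nat) (E : fn n -> fn n -> Prop) : Prop := {
  cong_dom   : forall h h', E h h' -> is_trat h /\ is_trat h';
  cong_refl  : forall h, is_trat h -> E h h;
  cong_sym   : forall h h', E h h' -> E h' h;
  cong_trans : forall h h' h'', E h h' -> E h' h'' -> E h h'';
  cong_add   : forall h1 h1' h2 h2', E h1 h1' -> E h2 h2' ->
                 E (tadd h1 h2) (tadd h1' h2');
  cong_mul   : forall h1 h1' h2 h2', E h1 h1' -> E h2 h2' ->
                 E (tmul h1 h2) (tmul h1' h2')
}.

Definition Vset (n : nat) (E : fn n -> fn n -> Prop) : pt n -> Prop :=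
  fun x => forall h h', E h h' -> h x = h' x.

Definition Erel (n : nat) (V : pt n -> Prop) : fn n -> fn n -> Prop :=
  fun h h' => is_trat h /\ is_trat h' /\ forall x, V x -> h x = h' x.

Definition rel_eq (n : nat) (E E' : fn n -> fn n -> Prop) : Prop :=
  forall h h', E h h' <-> E' h h'.

(** A T-algebra homomorphism  psi : \overline{T(X)}/E -> \overline{T(Y)}/F,
    presented (setoid style) by a map phi on representatives:
    psi [h]_E = [phi h]_F.  phi must respect E, and psi must preserve ⊕, ⊙
    and the structure map from T (hence also 0 = -oo and 1 = 0). *)
Record talg_hom (n m : nat) (E : fn n -> fn n -> Prop)
    (F : fn m -> fn m -> Prop) (phi : fn n -> fn m) : Prop := {
  hom_wd    : forall a b, E a b -> F (phi a) (phi b);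
  hom_add   : forall a b, is_trat a -> is_trat b ->
                F (phi (tadd a b)) (tadd (phi a) (phi b));
  hom_mul   : forall a b, is_trat a -> is_trat b ->
                F (phi (tmul a b)) (tmul (phi a) (phi b));
  hom_const : forall c : T, F (phi (@tconst n c)) (@tconst m c)
}.

Definition hom_injective (n m : nat) (E : fn n -> fn n -> Prop)
    (F : fn m -> fn m -> Prop) (phi : fn n -> fn m) : Prop :=
  forall a b, is_trat a -> is_trat b -> F (phi a) (phi b) -> E a b.

Definition hom_surjective (n m : nat) (E : fn n -> fn n -> Prop)
    (F : fn m -> fn m -> Prop) (phi : fn n -> fn m) : Prop :=
  forall b, is_trat b -> exists a, is_trat a /\ F (phi a) b.

Definition talg_iso (n m : nat) (E : fn n -> fn n -> Prop)
    (F : fn m -> fn m -> Prop) : Prop :=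
  exists phi : fn n -> fn m,
    talg_hom E F phi /\ hom_injective E F phi /\ hom_surjective E F phi.

(* Evaluation at a point y of V(F), composed with psi, is a T-algebra
   homomorphism from T(X)/E to T.  Any such homomorphism is evaluation at the
   point x whose coordinates are the images of the X_i (these are finite since
   X_i ⊙ X_i^-1 = 0), and x lies in V(E).  Hence if a and b agree on V(E), then
   psi a and psi b agree on V(F), i.e. are F-related when F = E(V(F)), and
   injectivity of psi gives a E b.  For the equivalence, apply this to an
   isomorphism and to its inverse. *)

From HB Require Import structures.
From Stdlib Require Import Reals FunctionalExtensionality ClassicalEpsilon.
From mathcomp Require Import all_boot.

Set Implicit Arguments.
Unset Strict Implicit.
Unset Printing Implicit Defensive.
Open Scope R_scope.

Lemma Rplus_associative : associative Rplus.
Proof. by move=> x y z; rewrite Rplus_assoc. Qed.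

HB.instance Definition _ :=
  Monoid.isComLaw.Build R R0 Rplus Rplus_associative Rplus_comm Rplus_0_l.

Definition delta n (i : 'I_n) : 'I_n -> nat := fun j => nat_of_bool (j == i).

Definition var n (i : 'I_n) : fn n := fun x => Some (x i).

Definition monomial n (c : R) (a : 'I_n -> nat) : fn n :=
  fun x => Some (c + lin a x).

Lemma lin0 n (x : pt n) : lin (fun _ => 0%N) x = 0.
Proof. by rewrite /lin big1 // => i _; rewrite Rmult_0_l. Qed.

Lemma linD n (a b : 'I_n -> nat) (x : pt n) :
  lin (fun j => (a j + b j)%N) x = lin a x + lin b x.
Proof. by rewrite /lin -big_split; apply: eq_bigr => i _; rewrite plus_INR Rmult_plus_distr_r. Qed.

Lemma lin_delta n (i : 'I_n) (x : pt n) : lin (delta i) x = x i.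
Proof.
rewrite /lin (bigD1 i) //= big1 => [|j /negbTE ji]; rewrite /delta ?eqxx ?ji /=; ring.
Qed.

Lemma exponent_ind n (P : ('I_n -> nat) -> Prop) :
  P (fun _ => 0%N) -> (forall i, P (delta i)) ->
  (forall a b, P a -> P b -> P (fun j => (a j + b j)%N)) -> forall a, P a.
Proof.
move=> P0 Pdelta PD a.
have Pmul k i : P (fun j => (k * delta i j)%N).
  elim: k => [|k IHk]; first by rewrite (_ : (fun _ => _) = fun _ => 0%N).
  rewrite (_ : (fun _ => _) = fun j => (k * delta i j + delta i j)%N); first exact: PD.
  by apply: functional_extensionality => j; rewrite mulSn addnC.
have Pcount r : P (fun j => (count_mem j r * a j)%N).
  elim: r => [|i r IHr]; first by rewrite (_ : (fun _ => _) = fun _ => 0%N).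
  rewrite (_ : (fun _ => _) = fun j => (a i * delta i j + count_mem j r * a j)%N).
    exact: PD.
  apply: functional_extensionality => j /=; rewrite mulnDl /delta.
  by case: (eqVneq i j) => [->|ij]; rewrite ?eqxx ?muln1 ?mul1n ?muln0 ?mul0n.
rewrite (_ : a = fun j => (count_mem j (enum 'I_n) * a j)%N); first exact: Pcount.
by apply: functional_extensionality => j; rewrite count_uniq_mem ?enum_uniq ?mem_enum ?mul1n.
Qed.

Lemma is_trat_peval n (p : tpoly n) : is_trat (peval p).
Proof.
exists p, [:: (0, fun _ => 0%N)]; split => // x /=.
by rewrite lin0; case: (peval p x) => //= r; f_equal; ring.
Qed.

Lemma is_trat_monomial n c (a : 'I_n -> nat) : is_trat (monomial c a).
Proof. exact: (is_trat_peval [:: (c, a)]). Qed.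

Lemma monomial0 n c : monomial c (fun _ : 'I_n => 0%N) = tconst (Some c).
Proof. by apply: functional_extensionality => x; rewrite /monomial lin0 Rplus_0_r. Qed.

Lemma monomial_delta n (i : 'I_n) : monomial 0 (delta i) = var i.
Proof. by apply: functional_extensionality => x; rewrite /monomial lin_delta Rplus_0_l. Qed.

Lemma is_trat_const n c : is_trat (@tconst n c).
Proof.
case: c => [r|]; first by rewrite -monomial0; exact: is_trat_monomial.
exact: (is_trat_peval [::]).
Qed.

Lemma is_trat_var n (i : 'I_n) : is_trat (var i).
Proof. by rewrite -monomial_delta; exact: is_trat_monomial. Qed.

Lemma is_trat_var_inv n (i : 'I_n) : is_trat (fun x : pt n => Some (- x i)).
Proof.
exists [:: (0, fun _ => 0%N)], [:: (0, delta i)]; split => // x /=.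
by rewrite lin0 lin_delta; f_equal; ring.
Qed.

Lemma peval_finite n (p : tpoly n) x : p <> [::] -> exists r, peval p x = Some r.
Proof. by case: p => // t p _ /=; case: (peval p x) => [r|]; eexists. Qed.

Section EvaluationOfHomToT.

Variables (n : nat) (ev : fn n -> T).
Hypothesis ev_add : forall a b, is_trat a -> is_trat b ->
  ev (tadd a b) = tmax (ev a) (ev b).
Hypothesis ev_mul : forall a b, is_trat a -> is_trat b ->
  ev (tmul a b) = tplus (ev a) (ev b).
Hypothesis ev_const : forall c, ev (tconst c) = c.

Lemma ev_var_finite i : exists r, ev (var i) = Some r.
Proof.
have var_mul_inv : tmul (var i) (fun x => Some (- x i)) = tconst (Some 0).
  by apply: functional_extensionality => x; rewrite /tmul /tconst /=; f_equal; ring.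
have := ev_mul (is_trat_var i) (is_trat_var_inv i).
by rewrite var_mul_inv ev_const; case: (ev (var i)) => [r|] // _; exists r.
Qed.

(* The default [0] is never used, by [ev_var_finite]. *)
Definition ev_point : pt n := fun i => if ev (var i) is Some r then r else 0.

Lemma ev_var i : ev (var i) = Some (ev_point i).
Proof. by rewrite /ev_point; case: (ev_var_finite i) => r ->. Qed.

Lemma ev_monomial c a : ev (monomial c a) = Some (c + lin a ev_point).
Proof.
elim/exponent_ind: a c => [c|i c|a b IHa IHb c].
- by rewrite monomial0 ev_const lin0 Rplus_0_r.
- have -> : monomial c (delta i) = tmul (tconst (Some c)) (var i).
    by apply: functional_extensionality => x; rewrite /monomial lin_delta.
  by rewrite ev_mul ?ev_const ?ev_var ?lin_delta //; [exact: is_trat_const | exact: is_trat_var].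
- have -> : monomial c (fun j => (a j + b j)%N) = tmul (monomial c a) (monomial 0 b).
    by apply: functional_extensionality => x; rewrite /tmul /monomial linD /=; f_equal; ring.
  rewrite ev_mul ?IHa ?IHb ?linD /=; try exact: is_trat_monomial.
  by f_equal; ring.
Qed.

Lemma ev_peval p : ev (peval p) = peval p ev_point.
Proof.
elim: p => [|[c a] p IHp]; first exact: (ev_const None).
rewrite (_ : peval _ = tadd (monomial c a) (peval p)) //.
by rewrite ev_add ?ev_monomial ?IHp //; [exact: is_trat_monomial | exact: is_trat_peval].
Qed.

(* [h = f / g] with [g] finite everywhere, so [h ⊙ g = f] and [ev] can be
   cancelled against the finite value [ev g = g ev_point]. *)
Lemma ev_is_eval h : is_trat h -> ev h = h ev_point.
Proof.
move=> trat_h; have [f [g [g_nonnil h_fg]]] := trat_h.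
have hg_f : tmul h (peval g) = peval f.
  apply: functional_extensionality => x; rewrite /tmul h_fg.
  have [v ->] := peval_finite x g_nonnil.
  by case: (peval f x) => //= r; f_equal; ring.
have := ev_mul trat_h (is_trat_peval g); rewrite hg_f !ev_peval h_fg.
have [v ->] := peval_finite ev_point g_nonnil.
by case: (ev h) => [e|]; case: (peval f ev_point) => // r /= [->]; f_equal; ring.
Qed.

End EvaluationOfHomToT.

Lemma is_trat_hom n m (E : fn n -> fn n -> Prop) (F : fn m -> fn m -> Prop)
    (psi : fn n -> fn m) a :
  congruence E -> congruence F -> talg_hom E F psi -> is_trat a -> is_trat (psi a).
Proof.
by move=> HE HF hom_psi trat_a; have [] := cong_dom HF (hom_wd hom_psi (cong_refl HE trat_a)).
Qed.

Lemma is_trat_tadd n (E : fn n -> fn n -> Prop) (a b : fn n) :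
  congruence E -> is_trat a -> is_trat b -> is_trat (tadd a b).
Proof. by move=> HE ta tb; have [] := cong_dom HE (cong_add HE (cong_refl HE ta) (cong_refl HE tb)). Qed.

Lemma is_trat_tmul n (E : fn n -> fn n -> Prop) (a b : fn n) :
  congruence E -> is_trat a -> is_trat b -> is_trat (tmul a b).
Proof. by move=> HE ta tb; have [] := cong_dom HE (cong_mul HE (cong_refl HE ta) (cong_refl HE tb)). Qed.

Lemma Vset_hom_pullback n m (E : fn n -> fn n -> Prop) (F : fn m -> fn m -> Prop)
    (psi : fn n -> fn m) y :
  congruence E -> talg_hom E F psi -> Vset F y ->
  exists x, Vset E x /\ forall h, is_trat h -> psi h y = h x.
Proof.
move=> HE hom_psi Fy.
pose ev h := psi h y.
have ev_add a b : is_trat a -> is_trat b -> ev (tadd a b) = tmax (ev a) (ev b).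
  by move=> ta tb; exact: Fy (hom_add hom_psi ta tb).
have ev_mul a b : is_trat a -> is_trat b -> ev (tmul a b) = tplus (ev a) (ev b).
  by move=> ta tb; exact: Fy (hom_mul hom_psi ta tb).
have ev_const c : ev (tconst c) = c by exact: Fy (hom_const hom_psi c).
have ev_eval := ev_is_eval ev_add ev_mul ev_const.
exists (ev_point ev); split=> // h h' Ehh'.
have [th th'] := cong_dom HE Ehh'.
by rewrite -ev_eval // -(ev_eval h') //; exact: Fy (hom_wd hom_psi Ehh').
Qed.

Lemma congruence_sub_Erel_Vset n (E : fn n -> fn n -> Prop) (a b : fn n) :
  congruence E -> E a b -> Erel (Vset E) a b.
Proof. by move=> HE Eab; have [ta tb] := cong_dom HE Eab; split; [|split] => // x; apply. Qed.

Lemma Erel_Vset_of_injective_hom n m (E : fn n -> fn n -> Prop)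
    (F : fn m -> fn m -> Prop) (psi : fn n -> fn m) :
  congruence E -> congruence F -> talg_hom E F psi -> hom_injective E F psi ->
  rel_eq F (Erel (Vset F)) -> rel_eq E (Erel (Vset E)).
Proof.
move=> HE HF hom_psi inj_psi F_closed a b; split; first exact: congruence_sub_Erel_Vset.
move=> [ta [tb ab_on_V]]; apply: inj_psi => //; apply/F_closed.
split; [|split]; try exact: is_trat_hom HE HF hom_psi _.
move=> y Fy; have [x [Ex psi_eval]] := Vset_hom_pullback HE hom_psi Fy.
by rewrite !psi_eval //; exact: ab_on_V.
Qed.

Section InverseIsomorphism.

Variables (n m : nat) (E : fn n -> fn n -> Prop) (F : fn m -> fn m -> Prop)
  (phi : fn n -> fn m).
Hypotheses (HE : congruence E) (HF : congruence F).
Hypotheses (hom_phi : talg_hom E F phi) (inj_phi : hom_injective E F phi).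
Hypothesis surj_phi : hom_surjective E F phi.

Definition hom_inverse (b : fn m) : fn n :=
  epsilon (inhabits (tconst None)) (fun a => is_trat a /\ F (phi a) b).

Lemma hom_inverseP b : is_trat b -> is_trat (hom_inverse b) /\ F (phi (hom_inverse b)) b.
Proof. by move=> tb; exact: (epsilon_spec _ (fun a => is_trat a /\ F (phi a) b) (surj_phi tb)). Qed.

Lemma hom_inverse_E b a : is_trat b -> is_trat a -> F b (phi a) -> E (hom_inverse b) a.
Proof.
move=> tb ta Fba; have [tib Fib] := hom_inverseP tb.
by apply: inj_phi => //; exact: (cong_trans HF Fib Fba).
Qed.

Lemma talg_hom_inverse : talg_hom F E hom_inverse.
Proof.
split.
- move=> b b' Fbb'; have [tb tb'] := cong_dom HF Fbb'; have [ti Fi] := hom_inverseP tb'.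
  by apply: hom_inverse_E => //; exact: (cong_trans HF Fbb' (cong_sym HF Fi)).
- move=> b1 b2 t1 t2; have [ti1 F1] := hom_inverseP t1; have [ti2 F2] := hom_inverseP t2.
  apply: hom_inverse_E; [exact: is_trat_tadd HF t1 t2 | exact: is_trat_tadd HE ti1 ti2|].
  exact: (cong_sym HF (cong_trans HF (hom_add hom_phi ti1 ti2) (cong_add HF F1 F2))).
- move=> b1 b2 t1 t2; have [ti1 F1] := hom_inverseP t1; have [ti2 F2] := hom_inverseP t2.
  apply: hom_inverse_E; [exact: is_trat_tmul HF t1 t2 | exact: is_trat_tmul HE ti1 ti2|].
  exact: (cong_sym HF (cong_trans HF (hom_mul hom_phi ti1 ti2) (cong_mul HF F1 F2))).
- move=> c; apply: hom_inverse_E; try exact: is_trat_const.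
  exact: (cong_sym HF (hom_const hom_phi c)).
Qed.

Lemma hom_inverse_injective : hom_injective F E hom_inverse.
Proof.
move=> b b' tb tb' Ebb'; have [_ Fb] := hom_inverseP tb; have [_ Fb'] := hom_inverseP tb'.
exact: (cong_trans HF (cong_sym HF Fb) (cong_trans HF (hom_wd hom_phi Ebb') Fb')).
Qed.

End InverseIsomorphism.

Theorem corollary3p16 :
  (forall (n m : nat) (E : fn n -> fn n -> Prop) (F : fn m -> fn m -> Prop)
     (psi : fn n -> fn m),
     congruence E -> congruence F ->
     talg_hom E F psi -> hom_injective E F psi ->
     rel_eq F (Erel (Vset F)) -> rel_eq E (Erel (Vset E)))
  /\
  (forall (n m : nat) (E : fn n -> fn n -> Prop) (F : fn m -> fn m -> Prop),
     congruence E -> congruence F -> talg_iso E F ->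
     (rel_eq E (Erel (Vset E)) <-> rel_eq F (Erel (Vset F)))).
Proof.
split; first exact: Erel_Vset_of_injective_hom.
move=> n m E F HE HF [phi [hom_phi [inj_phi surj_phi]]]; split.
- apply: (Erel_Vset_of_injective_hom HF HE).
  + exact: talg_hom_inverse HE HF hom_phi inj_phi surj_phi.
  + exact: hom_inverse_injective HF hom_phi surj_phi.
- exact: Erel_Vset_of_injective_hom HE HF hom_phi inj_phi.
Qed.
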